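(* Let $c$ be an ellipse and $e$ a confocal ellipse exterior to it, with semiaxes $(a_c,b_c)$ and $(a_e,b_e)$ respectively, and $k_e=a_e^2-a_c^2>0$. Let $P_1\dots P_N$ be an $N$-periodic billiard in $e$ with caustic $c$ with $N\equiv0\pmod 2$, let $Q_i$ be the contact point of the side $P_iP_{i+1}$ with $c$, and put $r_i=\overline{Q_{i-1}P_i}$, $l_i=\overline{P_iQ_i}$ (indices mod $N$). Then for all $i$: \begin{itemize} \item if $N=4n$: $r_i\,r_{i+n}=l_i\,l_{i+n}=k_e$; \item if $N=4n+2$: $r_i\,l_{i+n}=l_i\,r_{i+n+1}=k_e$. \end{itemize}
   Context: Confocal: $a_e^2-a_c^2=b_e^2-b_c^2=k_e$. A billiard in $e$ with caustic $c$ is a sequence of points $P_1,P_2,\dots$ on $e$ such that each line $P_iP_{i+1}$ is tangent to $c$ and $P_{i-1}P_i$, $P_iP_{i+1}$ are the two tangents from $P_i$ to $c$; it is traversed counterclockwise and is $N$-periodic if $P_{i+N}=P_i$. *)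

From Stdlib Require Import Reals.
Open Scope R_scope.

Definition point := (R * R)%type.

Definition on_ellipse (a b : R) (P : point) : Prop :=
  (fst P) ^ 2 / a ^ 2 + (snd P) ^ 2 / b ^ 2 = 1.

Definition on_tangent_at (a b : R) (T P : point) : Prop :=
  fst T * fst P / a ^ 2 + snd T * snd P / b ^ 2 = 1.

Definition edist (P Q : point) : R :=
  sqrt ((fst P - fst Q) ^ 2 + (snd P - snd Q) ^ 2).

(* Cross product (determinant) of position vectors; > 0 means Q is reached from P
   turning counterclockwise around the common centre. *)
Definition det2 (P Q : point) : R := fst P * snd Q - snd P * fst Q.

From Stdlib Require Import Reals Lra Lia ZArith.
Open Scope R_scope.

(* Parametrize the ellipses by eccentric angle, [e(s) = (a_e cos s, b_e sin s)] and
   [c(t) = (a_c cos t, b_c sin t)].  The point [e(s)] lies on the tangent to [c] at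
   [c(t)] iff [(a_e/a_c) cos s cos t + (b_e/b_c) sin s sin t = 1], a relation that is
   symmetric in [s] and [t].  Lifting angles to [R], the parameters of
   [P_0, Q_0, P_1, Q_1, ...] are therefore the iterates of a single increasing map [h]
   commuting with [+ PI]: the counterclockwise orientation selects, of the two roots
   of the relation, the one in [(s, s + PI)].

   Because the ellipses are confocal, the map [sigma = quarter_turn (b_c/a_c)]
   preserves the relation, hence commutes with [h], and [sigma o sigma] is [+ PI].
   If [N = 2m] and [h^(2N)] is the translation by [2 rho PI], then [h^m] and
   [sigma^rho] are commuting increasing maps with the same fourth iterate along the
   orbit, so they agree there; minimality of [N] forces [rho] odd.  Thus advancing
   [m] half-sides along the orbit acts on parameters as [sigma], up to a half turn.

   Finally, for a tangent pair [(s, t)],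
   [|e(s) c(t)| * |e(sigma s) c(sigma t)| = a_e^2 - a_c^2], and Ivory's lemma
   [|e(s) c(t)| = |e(t) c(s)|] brings the [r_i] to the same form as the [l_i]. *)

Lemma sin_cos_sq x : sin x ^ 2 + cos x ^ 2 = 1.
Proof. pose proof (sin2_cos2 x) as H. unfold Rsqr in H. lra. Qed.

Lemma period_Z (f : R -> R) :
  (forall x n, f (x + 2 * INR n * PI) = f x) ->
  forall x k, f (x + 2 * IZR k * PI) = f x.
Proof.
  intros Hper x k. destruct (Z_le_gt_dec 0 k) as [Hk|Hk].
  - destruct (Z_of_nat_complete k Hk) as [n ->]. rewrite <- INR_IZR_INZ. apply Hper.
  - destruct (Z_of_nat_complete (- k) ltac:(lia)) as [n Hn].
    replace (IZR k) with (- INR n) by (rewrite INR_IZR_INZ, <- Hn, opp_IZR; ring).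
    rewrite <- (Hper _ n). f_equal. ring.
Qed.

Lemma cos_period_Z x k : cos (x + 2 * IZR k * PI) = cos x.
Proof. apply period_Z. intros. apply cos_period. Qed.

Lemma sin_period_Z x k : sin (x + 2 * IZR k * PI) = sin x.
Proof. apply period_Z. intros. apply sin_period. Qed.

Lemma cos_sin_eq_shift x y : cos x = cos y -> sin x = sin y ->
  exists k : Z, x = y + 2 * IZR k * PI.
Proof.
  intros Hc Hs.
  assert (Hsin : sin (x - y) = 0) by (rewrite sin_minus, Hc, Hs; ring).
  assert (Hcos : cos (x - y) = 1)
    by (rewrite cos_minus, Hc, Hs; pose proof (sin_cos_sq y); lra).
  destruct (sin_eq_0_0 _ Hsin) as [j Hj].
  destruct (Z.Even_or_Odd j) as [[k ->]|[k ->]].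
  - exists k. rewrite mult_IZR in Hj. lra.
  - exfalso. rewrite Hj, plus_IZR, mult_IZR in Hcos.
    replace ((2 * IZR k + 1) * PI) with (PI + 2 * IZR k * PI) in Hcos by ring.
    rewrite cos_period_Z, cos_PI in Hcos. lra.
Qed.

Lemma cos_sin_eq_close x y : cos x = cos y -> sin x = sin y ->
  - (2 * PI) < x - y < 2 * PI -> x = y.
Proof.
  intros Hc Hs Hxy. destruct (cos_sin_eq_shift x y Hc Hs) as [k Hk].
  pose proof PI_RGT_0.
  assert (Hk1 : IZR k < 1) by (destruct (Rlt_or_le (IZR k) 1); nra).
  assert (Hk2 : IZR (-1) < IZR k) by (destruct (Rlt_or_le (-1) (IZR k)); nra).
  apply lt_IZR in Hk1, Hk2. replace k with 0%Z in Hk by lia. lra.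
Qed.

Lemma cos_gt_of_abs_lt u d : 0 < d <= PI -> - d < u < d -> cos d < cos u.
Proof.
  intros Hd Hu. destruct (Rle_or_lt 0 u).
  - apply cos_decreasing_1; lra.
  - rewrite <- (cos_neg u). apply cos_decreasing_1; lra.
Qed.

Lemma cos_lt_of_outside u d : 0 < d < PI -> d < u < 2 * PI - d -> cos u < cos d.
Proof.
  intros Hd Hu. destruct (Rle_or_lt u PI).
  - apply cos_decreasing_1; lra.
  - replace (cos u) with (cos (2 * PI - u))
      by (rewrite cos_minus, cos_2PI, sin_2PI; ring).
    apply cos_decreasing_1; lra.
Qed.

Lemma commute_add_PI (f : R -> R) :
  (forall z, f (z + PI) = f z + PI) ->
  forall q z, f (z + INR q * PI) = f z + INR q * PI.
Proof.
  intros Hf q. induction q as [|q IH]; intro z.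
  - rewrite !Rmult_0_l, !Rplus_0_r. reflexivity.
  - rewrite S_INR.
    replace (z + (INR q + 1) * PI) with (z + INR q * PI + PI) by ring.
    rewrite Hf, IH. ring.
Qed.

Lemma weighted_sq_pos p q s : 0 < p -> 0 < q -> 0 < p * cos s ^ 2 + q * sin s ^ 2.
Proof.
  intros Hp Hq. pose proof (sin_cos_sq s).
  assert (0 <= cos s ^ 2) by nra. assert (0 <= sin s ^ 2) by nra.
  destruct (Rle_or_lt (cos s ^ 2) 0); nra.
Qed.

(** * Polar form of a scaled circle *)

(* Polar coordinates of (p cos s, q sin s), the angle being taken within PI/2 of s. *)
Definition scaled_norm (p q s : R) : R := sqrt (p ^ 2 * cos s ^ 2 + q ^ 2 * sin s ^ 2).

Definition scaled_slope (p q s : R) : R :=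
  (q - p) * sin s * cos s / (p * cos s ^ 2 + q * sin s ^ 2).

Definition scaled_arg (p q s : R) : R := s + atan (scaled_slope p q s).

Section ScaledPolar.

Variables p q : R.
Hypotheses (Hp : 0 < p) (Hq : 0 < q).

Lemma scaled_norm_pos s : 0 < scaled_norm p q s.
Proof. apply sqrt_lt_R0, weighted_sq_pos; nra. Qed.

Lemma scaled_norm_sq s : scaled_norm p q s ^ 2 = p ^ 2 * cos s ^ 2 + q ^ 2 * sin s ^ 2.
Proof.
  unfold scaled_norm. rewrite pow2_sqrt; [reflexivity|].
  apply Rlt_le, weighted_sq_pos; nra.
Qed.

Lemma sqrt_1_plus_scaled_slope_sq s :
  sqrt (1 + scaled_slope p q s * scaled_slope p q s) = scaled_norm p q s / (p * cos s ^ 2 + q * sin s ^ 2).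
Proof.
  pose proof (weighted_sq_pos p q s Hp Hq) as HD. pose proof (scaled_norm_pos s) as HN.
  apply sqrt_lem_1.
  - nra.
  - apply Rlt_le, Rdiv_lt_0_compat; assumption.
  - replace (scaled_norm p q s / (p * cos s ^ 2 + q * sin s ^ 2) *
             (scaled_norm p q s / (p * cos s ^ 2 + q * sin s ^ 2)))
      with (scaled_norm p q s ^ 2 / (p * cos s ^ 2 + q * sin s ^ 2) ^ 2) by (field; lra).
    rewrite scaled_norm_sq. unfold scaled_slope. pose proof (sin_cos_sq s).
    field_simplify_eq; [|lra].
    replace (sin s ^ 4) with ((sin s ^ 2) ^ 2) by ring.
    replace (sin s ^ 2) with (1 - cos s ^ 2) by lra. ring.
Qed.

Lemma scaled_norm_cos s : scaled_norm p q s * cos (scaled_arg p q s) = p * cos s.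
Proof.
  unfold scaled_arg. rewrite cos_plus, cos_atan, sin_atan. unfold Rsqr.
  rewrite sqrt_1_plus_scaled_slope_sq. unfold scaled_slope.
  pose proof (weighted_sq_pos p q s Hp Hq). pose proof (scaled_norm_pos s).
  pose proof (sin_cos_sq s). field_simplify; try lra.
  replace (sin s ^ 2) with (1 - cos s ^ 2) by lra. ring.
Qed.

Lemma scaled_norm_sin s : scaled_norm p q s * sin (scaled_arg p q s) = q * sin s.
Proof.
  unfold scaled_arg. rewrite sin_plus, cos_atan, sin_atan. unfold Rsqr.
  rewrite sqrt_1_plus_scaled_slope_sq. unfold scaled_slope.
  pose proof (weighted_sq_pos p q s Hp Hq). pose proof (scaled_norm_pos s).
  pose proof (sin_cos_sq s). field_simplify; try lra.
  replace (cos s ^ 2) with (1 - sin s ^ 2) by lra. ring.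
Qed.

End ScaledPolar.

Lemma scaled_arg_near p q s : - (PI / 2) < scaled_arg p q s - s < PI / 2.
Proof. unfold scaled_arg. pose proof (atan_bound (scaled_slope p q s)). lra. Qed.

Lemma scaled_norm_add_PI p q s : scaled_norm p q (s + PI) = scaled_norm p q s.
Proof. unfold scaled_norm. rewrite neg_cos, neg_sin. f_equal. ring. Qed.

Lemma scaled_arg_add_PI p q s : scaled_arg p q (s + PI) = scaled_arg p q s + PI.
Proof.
  unfold scaled_arg, scaled_slope. rewrite neg_cos, neg_sin.
  replace ((q - p) * - sin s * - cos s / (p * (- cos s) ^ 2 + q * (- sin s) ^ 2))
    with ((q - p) * sin s * cos s / (p * cos s ^ 2 + q * sin s ^ 2)) by (f_equal; ring).
  ring.
Qed.

(** * The tangency relation and its two roots *)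

(* [tangency (A / a) (B / b) s t = 0] says that the point of parameter [s] of the
   ellipse with semiaxes [A, B] lies on the tangent to the ellipse [(a, b)] at its
   point of parameter [t]. *)
Definition tangency (al be s t : R) : R := al * cos s * cos t + be * sin s * sin t - 1.

(* In polar form [tangency al be s t = rho * cos (t - theta) - 1], with
   [rho = scaled_norm al be s > 1] and [theta = scaled_arg al be s] (see
   [tangency_polar]), so its roots are [theta +- acos (1 / rho)]. *)
Definition aperture (al be s : R) : R := acos (/ scaled_norm al be s).
Definition next_root (al be s : R) : R := scaled_arg al be s + aperture al be s.
Definition prev_root (al be s : R) : R := scaled_arg al be s - aperture al be s.

Lemma tangency_sym al be s t : tangency al be s t = tangency al be t s.
Proof. unfold tangency. ring. Qed.

Lemma tangency_period_Z al be s t k :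
  tangency al be s (t + 2 * IZR k * PI) = tangency al be s t.
Proof. unfold tangency. rewrite cos_period_Z, sin_period_Z. reflexivity. Qed.

Lemma next_root_add_PI al be s : next_root al be (s + PI) = next_root al be s + PI.
Proof. unfold next_root, aperture. rewrite scaled_arg_add_PI, scaled_norm_add_PI. ring. Qed.

Section Tangency.

Variables al be : R.
Hypotheses (Hal : 1 < al) (Hbe : 1 < be).

Let Hal0 : 0 < al. Proof. lra. Qed.
Let Hbe0 : 0 < be. Proof. lra. Qed.

Lemma scaled_norm_gt1 s : 1 < scaled_norm al be s.
Proof.
  pose proof (scaled_norm_pos al be Hal0 Hbe0 s) as HN.
  pose proof (scaled_norm_sq al be Hal0 Hbe0 s) as HN2.
  pose proof (weighted_sq_pos (al ^ 2 - 1) (be ^ 2 - 1) s ltac:(nra) ltac:(nra)).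
  pose proof (sin_cos_sq s). nra.
Qed.

Lemma aperture_cos s : scaled_norm al be s * cos (aperture al be s) = 1.
Proof.
  pose proof (scaled_norm_gt1 s). unfold aperture.
  assert (0 < / scaled_norm al be s < 1).
  { split; [apply Rinv_0_lt_compat; lra|]. rewrite <- Rinv_1. apply Rinv_lt_contravar; lra. }
  rewrite cos_acos by lra. field. lra.
Qed.

Lemma aperture_bounds s : 0 < aperture al be s < PI / 2.
Proof.
  pose proof (scaled_norm_gt1 s). pose proof (aperture_cos s) as Hc.
  assert (Hb : -1 < / scaled_norm al be s < 1).
  { split.
    - assert (0 < / scaled_norm al be s) by (apply Rinv_0_lt_compat; lra). lra.
    - rewrite <- Rinv_1. apply Rinv_lt_contravar; lra. }
  pose proof (acos_bound_lt _ Hb). unfold aperture in *. split; [lra|].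
  destruct (Rlt_or_le (acos (/ scaled_norm al be s)) (PI / 2)) as [|Hge]; [assumption|].
  assert (cos (acos (/ scaled_norm al be s)) <= 0) by (apply cos_le_0; lra).
  nra.
Qed.

Lemma tangency_polar s t : tangency al be s t =
  scaled_norm al be s * (cos (t - scaled_arg al be s) - cos (aperture al be s)).
Proof.
  rewrite Rmult_minus_distr_l, aperture_cos, cos_minus.
  replace (scaled_norm al be s *
             (cos t * cos (scaled_arg al be s) + sin t * sin (scaled_arg al be s)))
    with (cos t * (scaled_norm al be s * cos (scaled_arg al be s)) +
          sin t * (scaled_norm al be s * sin (scaled_arg al be s))) by ring.
  rewrite scaled_norm_cos, scaled_norm_sin by assumption. unfold tangency. ring.
Qed.

Lemma tangency_pos s t : - aperture al be s < t - scaled_arg al be s < aperture al be s ->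
  0 < tangency al be s t.
Proof.
  intro Ht. rewrite tangency_polar. pose proof (aperture_bounds s).
  pose proof (scaled_norm_pos al be Hal0 Hbe0 s). pose proof PI_RGT_0.
  assert (cos (aperture al be s) < cos (t - scaled_arg al be s))
    by (apply cos_gt_of_abs_lt; lra).
  nra.
Qed.

Lemma tangency_neg s t :
  aperture al be s < t - scaled_arg al be s < 2 * PI - aperture al be s \/
  aperture al be s - 2 * PI < t - scaled_arg al be s < - aperture al be s ->
  tangency al be s t < 0.
Proof.
  intro Ht. rewrite tangency_polar. pose proof (aperture_bounds s).
  pose proof (scaled_norm_pos al be Hal0 Hbe0 s). pose proof PI_RGT_0.
  assert (cos (t - scaled_arg al be s) < cos (aperture al be s)).
  { destruct Ht.
    - apply cos_lt_of_outside; lra.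
    - rewrite <- cos_neg. apply cos_lt_of_outside; lra. }
  nra.
Qed.

Lemma tangency_next_root s : tangency al be s (next_root al be s) = 0.
Proof.
  rewrite tangency_polar. unfold next_root.
  replace (scaled_arg al be s + aperture al be s - scaled_arg al be s)
    with (aperture al be s) by ring.
  ring.
Qed.

Lemma tangency_prev_root s : tangency al be s (prev_root al be s) = 0.
Proof.
  rewrite tangency_polar. unfold prev_root.
  replace (scaled_arg al be s - aperture al be s - scaled_arg al be s)
    with (- aperture al be s) by ring.
  rewrite cos_neg. ring.
Qed.

Lemma next_root_of_window s t : tangency al be s t = 0 ->
  - aperture al be s < t - scaled_arg al be s < 2 * PI - aperture al be s ->
  t = next_root al be s.
Proof.
  intros H0 Ht. unfold next_root.
  destruct (Rtotal_order (t - scaled_arg al be s) (aperture al be s)) as [Hlt|[Heq|Hgt]].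
  - assert (0 < tangency al be s t) by (apply tangency_pos; lra). lra.
  - lra.
  - assert (tangency al be s t < 0) by (apply tangency_neg; left; lra). lra.
Qed.

Lemma prev_root_of_window s t : tangency al be s t = 0 ->
  aperture al be s - 2 * PI < t - scaled_arg al be s < aperture al be s ->
  t = prev_root al be s.
Proof.
  intros H0 Ht. unfold prev_root.
  destruct (Rtotal_order (t - scaled_arg al be s) (- aperture al be s)) as [Hlt|[Heq|Hgt]].
  - assert (tangency al be s t < 0) by (apply tangency_neg; right; lra). lra.
  - lra.
  - assert (0 < tangency al be s t) by (apply tangency_pos; lra). lra.
Qed.

Lemma self_within_aperture s :
  - aperture al be s < s - scaled_arg al be s < aperture al be s.
Proof.
  pose proof (scaled_arg_near al be s). pose proof (aperture_bounds s).
  pose proof PI_RGT_0.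
  assert (Hss : 0 < tangency al be s s).
  { unfold tangency. pose proof (weighted_sq_pos (al - 1) (be - 1) s ltac:(lra) ltac:(lra)).
    pose proof (sin_cos_sq s). nra. }
  split.
  - destruct (Rlt_or_le (- aperture al be s) (s - scaled_arg al be s)) as [|Hle]; [assumption|].
    assert (tangency al be s s <= 0); [|lra].
    destruct Hle as [Hlt|Heq].
    + apply Rlt_le, tangency_neg. right. lra.
    + rewrite tangency_polar, Heq, cos_neg. lra.
  - destruct (Rlt_or_le (s - scaled_arg al be s) (aperture al be s)) as [|Hle]; [assumption|].
    assert (tangency al be s s <= 0); [|lra].
    destruct Hle as [Hlt|Heq].
    + apply Rlt_le, tangency_neg. left. lra.
    + rewrite tangency_polar, <- Heq. lra.
Qed.

Lemma next_root_bounds s : s < next_root al be s < s + PI.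
Proof.
  pose proof (self_within_aperture s). pose proof (aperture_bounds s).
  pose proof (scaled_arg_near al be s). unfold next_root. lra.
Qed.

Lemma prev_root_bounds s : s - PI < prev_root al be s < s.
Proof.
  pose proof (self_within_aperture s). pose proof (aperture_bounds s).
  pose proof (scaled_arg_near al be s). unfold prev_root. lra.
Qed.

Lemma next_root_unique s t : tangency al be s t = 0 -> s < t < s + PI ->
  t = next_root al be s.
Proof.
  intros H0 Ht. apply next_root_of_window; [assumption|].
  pose proof (self_within_aperture s). pose proof (aperture_bounds s). lra.
Qed.

Lemma prev_root_unique s t : tangency al be s t = 0 -> s - PI < t < s ->
  t = prev_root al be s.
Proof.
  intros H0 Ht. apply prev_root_of_window; [assumption|].
  pose proof (self_within_aperture s). pose proof (aperture_bounds s). lra.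
Qed.

Lemma prev_next_root s : prev_root al be (next_root al be s) = s.
Proof.
  symmetry. apply prev_root_unique.
  - rewrite tangency_sym. apply tangency_next_root.
  - pose proof (next_root_bounds s). lra.
Qed.

Lemma next_prev_root s : next_root al be (prev_root al be s) = s.
Proof.
  symmetry. apply next_root_unique.
  - rewrite tangency_sym. apply tangency_prev_root.
  - pose proof (prev_root_bounds s). lra.
Qed.

Lemma next_prev_gap s : 0 < next_root al be s - prev_root al be s < PI.
Proof. pose proof (aperture_bounds s). unfold next_root, prev_root. lra. Qed.

Lemma tangency_roots s t : tangency al be s t = 0 -> exists k : Z,
  t = next_root al be s + 2 * IZR k * PI \/ t = prev_root al be s + 2 * IZR k * PI.
Proof.
  intro H0. pose proof PI_RGT_0.
  set (u := t - scaled_arg al be s + aperture al be s).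
  destruct (base_Int_part (u / (2 * PI))) as [Hk1 Hk2].
  set (k := Int_part (u / (2 * PI))) in *.
  assert (Hu : 2 * IZR k * PI <= u < 2 * IZR k * PI + 2 * PI).
  { split.
    - apply (Rmult_le_compat_r (2 * PI)) in Hk1; [|lra].
      unfold Rdiv in Hk1. rewrite Rmult_assoc, Rinv_l in Hk1 by lra. lra.
    - assert (Hk3 : u / (2 * PI) < IZR k + 1) by lra.
      apply (Rmult_lt_compat_r (2 * PI)) in Hk3; [|lra].
      unfold Rdiv in Hk3. rewrite Rmult_assoc, Rinv_l in Hk3 by lra. lra. }
  assert (H0' : tangency al be s (t + 2 * IZR (- k) * PI) = 0)
    by (rewrite tangency_period_Z; assumption).
  rewrite opp_IZR in H0'.
  exists k. destruct (Req_dec u (2 * IZR k * PI)) as [Heq|Hne].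
  - right. unfold prev_root. unfold u in Heq. lra.
  - left. apply (Rplus_eq_reg_r (2 * - IZR k * PI)).
    replace (next_root al be s + 2 * IZR k * PI + 2 * - IZR k * PI)
      with (next_root al be s) by ring.
    apply next_root_of_window; [assumption|]. unfold u in *. lra.
Qed.

Lemma next_root_mono x y : x < y -> next_root al be x < next_root al be y.
Proof.
  intro Hxy.
  destruct (Rlt_or_le (next_root al be x) (next_root al be y)) as [|[Hlt|Heq]];
    [assumption| exfalso..].
  - pose proof (next_root_bounds x). pose proof (next_root_bounds y).
    set (X := next_root al be x) in *.
    assert (Hneg : tangency al be y X < 0).
    { apply tangency_neg. left. pose proof (self_within_aperture y).
      pose proof (aperture_bounds y). unfold X, next_root in *. lra. }
    assert (0 < tangency al be X y).
    { apply tangency_pos. pose proof (self_within_aperture X).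
      pose proof (prev_next_root x) as Hp. unfold prev_root in Hp. fold X in Hp. lra. }
    rewrite tangency_sym in Hneg. lra.
  - assert (y = x); [|lra].
    rewrite <- (prev_next_root y), Heq. apply prev_next_root.
Qed.

End Tangency.

(** * The quarter turn *)

Lemma cos_add_PI2 x : cos (x + PI / 2) = - sin x.
Proof. rewrite cos_plus, cos_PI2, sin_PI2. ring. Qed.

Lemma sin_add_PI2 x : sin (x + PI / 2) = cos x.
Proof. rewrite sin_plus, cos_PI2, sin_PI2. ring. Qed.

(* [quarter_turn ga x] is the argument of [(- sin x, ga * cos x)]; for [ga = b / a]
   it is the parameter of the point of the ellipse [(a, b)] whose normal has
   direction [(- sin x, cos x)]. *)
Definition quarter_turn (ga x : R) : R := scaled_arg 1 ga (x + PI / 2).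
Definition quarter_norm (ga x : R) : R := sqrt (sin x ^ 2 + ga ^ 2 * cos x ^ 2).

Section QuarterTurn.

Variable ga : R.
Hypothesis Hga : 0 < ga.

Lemma quarter_norm_scaled x : quarter_norm ga x = scaled_norm 1 ga (x + PI / 2).
Proof. unfold quarter_norm, scaled_norm. rewrite cos_add_PI2, sin_add_PI2. f_equal. ring. Qed.

Lemma quarter_norm_pos x : 0 < quarter_norm ga x.
Proof. rewrite quarter_norm_scaled. apply scaled_norm_pos; lra. Qed.

Lemma quarter_norm_sq x : quarter_norm ga x ^ 2 = sin x ^ 2 + ga ^ 2 * cos x ^ 2.
Proof.
  rewrite quarter_norm_scaled, scaled_norm_sq, cos_add_PI2, sin_add_PI2 by lra. ring.
Qed.

Lemma quarter_turn_cos x : cos (quarter_turn ga x) = - sin x / quarter_norm ga x.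
Proof.
  pose proof (quarter_norm_pos x). apply (Rmult_eq_reg_l (quarter_norm ga x)); [|lra].
  rewrite quarter_norm_scaled at 1. unfold quarter_turn.
  rewrite scaled_norm_cos, cos_add_PI2 by lra. field. lra.
Qed.

Lemma quarter_turn_sin x : sin (quarter_turn ga x) = ga * cos x / quarter_norm ga x.
Proof.
  pose proof (quarter_norm_pos x). apply (Rmult_eq_reg_l (quarter_norm ga x)); [|lra].
  rewrite quarter_norm_scaled at 1. unfold quarter_turn.
  rewrite scaled_norm_sin, sin_add_PI2 by lra. field. lra.
Qed.

Lemma quarter_turn_bounds x : x < quarter_turn ga x < x + PI.
Proof. unfold quarter_turn. pose proof (scaled_arg_near 1 ga (x + PI / 2)). lra. Qed.

Lemma quarter_turn_add_PI x : quarter_turn ga (x + PI) = quarter_turn ga x + PI.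
Proof.
  unfold quarter_turn. rewrite <- scaled_arg_add_PI. f_equal. ring.
Qed.

Lemma quarter_turn_mono x y : x < y -> quarter_turn ga x < quarter_turn ga y.
Proof.
  intro Hxy. pose proof PI_RGT_0.
  pose proof (quarter_turn_bounds x). pose proof (quarter_turn_bounds y).
  destruct (Rle_or_lt PI (y - x)); [lra|].
  assert (Hs : 0 < sin (quarter_turn ga y - quarter_turn ga x)).
  { rewrite sin_minus, !quarter_turn_sin, !quarter_turn_cos.
    pose proof (quarter_norm_pos x). pose proof (quarter_norm_pos y).
    assert (Hsy : 0 < sin (y - x)) by (apply sin_gt_0; lra).
    rewrite sin_minus in Hsy.
    replace (ga * cos y / quarter_norm ga y * (- sin x / quarter_norm ga x) -
             - sin y / quarter_norm ga y * (ga * cos x / quarter_norm ga x))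
      with (ga * (sin y * cos x - cos y * sin x) / (quarter_norm ga x * quarter_norm ga y))
      by (field; lra).
    apply Rdiv_lt_0_compat; nra. }
  destruct (Rlt_or_le (quarter_turn ga x) (quarter_turn ga y)) as [|Hle]; [assumption|].
  assert (0 <= sin (quarter_turn ga x - quarter_turn ga y)) by (apply sin_ge_0; lra).
  rewrite <- Ropp_minus_distr, sin_neg in Hs. lra.
Qed.

Lemma quarter_norm_quarter_turn x : quarter_norm ga (quarter_turn ga x) = ga / quarter_norm ga x.
Proof.
  pose proof (quarter_norm_pos x). pose proof (quarter_norm_pos (quarter_turn ga x)).
  apply Rsqr_inj; [lra|apply Rlt_le, Rdiv_lt_0_compat; lra|].
  rewrite !Rsqr_pow2, quarter_norm_sq, quarter_turn_sin, quarter_turn_cos.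
  replace ((ga * cos x / quarter_norm ga x) ^ 2 + ga ^ 2 * (- sin x / quarter_norm ga x) ^ 2)
    with (ga ^ 2 * (sin x ^ 2 + cos x ^ 2) / quarter_norm ga x ^ 2) by (field; lra).
  rewrite sin_cos_sq. field. lra.
Qed.

Lemma quarter_turn_twice x : quarter_turn ga (quarter_turn ga x) = x + PI.
Proof.
  pose proof (quarter_norm_pos x). pose proof PI_RGT_0.
  apply cos_sin_eq_close.
  - rewrite quarter_turn_cos, quarter_norm_quarter_turn, quarter_turn_sin, neg_cos.
    field. lra.
  - rewrite quarter_turn_sin, quarter_norm_quarter_turn, quarter_turn_cos, neg_sin.
    field. lra.
  - pose proof (quarter_turn_bounds x). pose proof (quarter_turn_bounds (quarter_turn ga x)).
    lra.
Qed.

Lemma iter_quarter_turn_even q x : Nat.iter (2 * q) (quarter_turn ga) x = x + INR q * PI.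
Proof.
  induction q as [|q IH].
  - simpl. ring.
  - replace (2 * S q)%nat with (S (S (2 * q))) by lia.
    rewrite !Nat.iter_succ, IH, quarter_turn_twice, S_INR. ring.
Qed.

End QuarterTurn.

Lemma sin_cos_cross_sq x y : sin x ^ 2 * cos y ^ 2 + cos x ^ 2 * sin y ^ 2 =
  1 - (cos x * cos y) ^ 2 - (sin x * sin y) ^ 2.
Proof.
  pose proof (sin_cos_sq x). pose proof (sin_cos_sq y).
  rewrite !Rpow_mult_distr. replace (sin x ^ 2) with (1 - cos x ^ 2) by lra.
  replace (sin y ^ 2) with (1 - cos y ^ 2) by lra. ring.
Qed.

Definition cross (al be x y : R) : R := be * sin x * cos y - al * cos x * sin y.

Section Confocal.

Variables al be ga : R.
Hypotheses (Hal : 1 < al) (Hbe : 1 < be) (Hga : 0 < ga)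
  (Hconf : ga ^ 2 * (be ^ 2 - 1) = al ^ 2 - 1).

Lemma confocal_sq_identity u v : al * u + be * v = 1 ->
  (al * v + be * ga ^ 2 * u) ^ 2 = v ^ 2 + ga ^ 2 * (1 - u ^ 2 - v ^ 2) + ga ^ 4 * u ^ 2.
Proof.
  intro Huv.
  assert (E : (al * v + be * ga ^ 2 * u) ^ 2 - (v ^ 2 + ga ^ 2 * (1 - u ^ 2 - v ^ 2) + ga ^ 4 * u ^ 2)
    = ga ^ 2 * ((al * u + be * v) ^ 2 - 1) + v ^ 2 * ((al ^ 2 - 1) - ga ^ 2 * (be ^ 2 - 1))
      + ga ^ 2 * u ^ 2 * (ga ^ 2 * (be ^ 2 - 1) - (al ^ 2 - 1))) by ring.
  rewrite Huv, Hconf in E. lra.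
Qed.

Lemma confocal_pos u v : al * u + be * v = 1 -> -1 <= u - v <= 1 ->
  0 < al * v + be * ga ^ 2 * u.
Proof.
  intros Huv Hd.
  assert (E : (be ^ 2 - 1) * (al * v + be * ga ^ 2 * u) =
     (al + 1) * (be - 1) / 2 * (1 - (u - v)) + (al - 1) * (be + 1) / 2 * (1 + (u - v))
     + (al * be - 1) * (al * u + be * v - 1)).
  { replace ((be ^ 2 - 1) * (al * v + be * ga ^ 2 * u))
      with ((be ^ 2 - 1) * al * v + be * (ga ^ 2 * (be ^ 2 - 1)) * u) by ring.
    rewrite Hconf. field. }
  rewrite Huv in E.
  assert (0 < (al + 1) * (be - 1)) by nra. assert (0 < (al - 1) * (be + 1)) by nra.
  apply (Rmult_lt_reg_l (be ^ 2 - 1)); [nra|]. rewrite Rmult_0_r, E. nra.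
Qed.

Lemma quarter_norm_mul x y : tangency al be x y = 0 ->
  quarter_norm ga x * quarter_norm ga y =
  al * (sin x * sin y) + be * ga ^ 2 * (cos x * cos y).
Proof.
  intro Ht. unfold tangency in Ht.
  pose proof (quarter_norm_pos ga Hga x). pose proof (quarter_norm_pos ga Hga y).
  apply Rsqr_inj.
  - nra.
  - apply Rlt_le, confocal_pos; [lra|].
    replace (cos x * cos y - sin x * sin y) with (cos (x + y)) by (rewrite cos_plus; ring).
    apply COS_bound.
  - rewrite !Rsqr_pow2, Rpow_mult_distr, !quarter_norm_sq, confocal_sq_identity by lra.
    rewrite <- sin_cos_cross_sq. ring.
Qed.

Lemma tangency_quarter_turn x y : tangency al be x y = 0 ->
  tangency al be (quarter_turn ga x) (quarter_turn ga y) = 0.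
Proof.
  intro Ht. pose proof (quarter_norm_mul x y Ht) as HM.
  pose proof (quarter_norm_pos ga Hga x). pose proof (quarter_norm_pos ga Hga y).
  unfold tangency. rewrite !quarter_turn_cos, !quarter_turn_sin by assumption.
  replace (al * (- sin x / quarter_norm ga x) * (- sin y / quarter_norm ga y) +
           be * (ga * cos x / quarter_norm ga x) * (ga * cos y / quarter_norm ga y) - 1)
    with ((al * (sin x * sin y) + be * ga ^ 2 * (cos x * cos y)) /
          (quarter_norm ga x * quarter_norm ga y) - 1) by (field; lra).
  rewrite <- HM. field. lra.
Qed.

Lemma next_root_quarter_turn x :
  next_root al be (quarter_turn ga x) = quarter_turn ga (next_root al be x).
Proof.
  symmetry. apply next_root_unique; [assumption..| |].
  - apply tangency_quarter_turn, tangency_next_root; assumption.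
  - pose proof (next_root_bounds al be Hal Hbe x). split.
    + apply quarter_turn_mono; [assumption|lra].
    + rewrite <- quarter_turn_add_PI. apply quarter_turn_mono; [assumption|lra].
Qed.

Lemma cross_quarter_turn x y :
  cross al be (quarter_turn ga x) (quarter_turn ga y) =
  ga * cross be al x y / (quarter_norm ga x * quarter_norm ga y).
Proof.
  pose proof (quarter_norm_pos ga Hga x). pose proof (quarter_norm_pos ga Hga y).
  unfold cross. rewrite !quarter_turn_cos, !quarter_turn_sin by assumption.
  field. lra.
Qed.

Lemma cross_mul_swap x y : tangency al be x y = 0 ->
  cross al be x y * cross be al x y = (be ^ 2 - 1) * (quarter_norm ga x * quarter_norm ga y).
Proof.
  intro Ht. rewrite quarter_norm_mul by assumption. unfold tangency in Ht.
  set (u := cos x * cos y). set (v := sin x * sin y).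
  assert (Huv : al * u + be * v = 1) by (unfold u, v; lra).
  transitivity (al * be * (1 - u ^ 2 - v ^ 2) - (al ^ 2 + be ^ 2) * u * v).
  { unfold u, v. rewrite <- sin_cos_cross_sq. unfold cross. ring. }
  replace (al * be * (1 - u ^ 2 - v ^ 2) - (al ^ 2 + be ^ 2) * u * v)
    with ((al ^ 2 - 1) * be * u + (be ^ 2 - 1) * al * v
          + al * be * (1 - (al * u + be * v) ^ 2)
          - ((al ^ 2 - 1) * be * u + (be ^ 2 - 1) * al * v) * (1 - (al * u + be * v))) by ring.
  rewrite Huv, <- Hconf. ring.
Qed.

End Confocal.

(** * Distances between confocal ellipses *)

Definition ellipse_pt (A B x : R) : point := (A * cos x, B * sin x).

Definition sqdist (A B a b x y : R) : R :=
  (A * cos x - a * cos y) ^ 2 + (B * sin x - b * sin y) ^ 2.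

Lemma edist_ellipse_pt A B a b x y :
  edist (ellipse_pt A B x) (ellipse_pt a b y) = sqrt (sqdist A B a b x y).
Proof. reflexivity. Qed.

Lemma edist_sym P Q : edist P Q = edist Q P.
Proof. unfold edist. f_equal. ring. Qed.

Lemma sqdist_nonneg A B a b x y : 0 <= sqdist A B a b x y.
Proof. unfold sqdist. apply Rplus_le_le_0_compat; apply pow2_ge_0. Qed.

Lemma sqdist_swap A B a b x y : A ^ 2 - a ^ 2 = B ^ 2 - b ^ 2 ->
  sqdist A B a b x y = sqdist A B a b y x.
Proof.
  intro Hk.
  assert (E : sqdist A B a b x y - sqdist A B a b y x =
     (A ^ 2 - a ^ 2) * (cos x ^ 2 - cos y ^ 2) + (B ^ 2 - b ^ 2) * (sin x ^ 2 - sin y ^ 2))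
    by (unfold sqdist; ring).
  rewrite Hk in E.
  replace ((B ^ 2 - b ^ 2) * (cos x ^ 2 - cos y ^ 2) + (B ^ 2 - b ^ 2) * (sin x ^ 2 - sin y ^ 2))
    with ((B ^ 2 - b ^ 2) * ((sin x ^ 2 + cos x ^ 2) - (sin y ^ 2 + cos y ^ 2))) in E by ring.
  rewrite !sin_cos_sq in E. lra.
Qed.

Lemma sqdist_add_PI A B a b x y q :
  sqdist A B a b (x + INR q * PI) (y + INR q * PI) = sqdist A B a b x y.
Proof.
  induction q as [|q IH].
  - rewrite !Rmult_0_l, !Rplus_0_r. reflexivity.
  - rewrite S_INR, <- IH.
    replace (x + (INR q + 1) * PI) with (x + INR q * PI + PI) by ring.
    replace (y + (INR q + 1) * PI) with (y + INR q * PI + PI) by ring.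
    unfold sqdist. rewrite !neg_cos, !neg_sin. ring.
Qed.

Lemma ratio_gt1 A a : 0 < a -> 0 < A -> a ^ 2 < A ^ 2 -> 1 < A / a.
Proof.
  intros Ha HA HaA. apply (Rmult_lt_reg_r a); [assumption|].
  unfold Rdiv. rewrite Rmult_assoc, Rinv_l, Rmult_1_l, Rmult_1_r by lra. nra.
Qed.

Lemma confocal_ratios A B a b : 0 < a -> 0 < b -> A ^ 2 - a ^ 2 = B ^ 2 - b ^ 2 ->
  (b / a) ^ 2 * ((B / b) ^ 2 - 1) = (A / a) ^ 2 - 1.
Proof.
  intros Ha Hb Hk. field_simplify; [|lra..].
  replace (B ^ 2) with (A ^ 2 - a ^ 2 + b ^ 2) by lra. field. lra.
Qed.

(* The segment from [ellipse_pt A B x] to [ellipse_pt a b y] is [cross] times the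
   tangent vector [(- a sin y, b cos y)]. *)
Lemma sqdist_tangency A B a b x y : 0 < a -> 0 < b ->
  tangency (A / a) (B / b) x y = 0 ->
  sqdist A B a b x y =
  (a * cross (A / a) (B / b) x y * quarter_norm (b / a) y) ^ 2.
Proof.
  intros Ha Hb Ht.
  assert (Hq : quarter_norm (b / a) y ^ 2 = sin y ^ 2 + (b / a) ^ 2 * cos y ^ 2)
    by (apply quarter_norm_sq, Rdiv_lt_0_compat; assumption).
  set (al := A / a) in *. set (be := B / b) in *.
  set (lam := cross al be x y).
  replace A with (al * a) by (unfold al; field; lra).
  replace B with (be * b) by (unfold be; field; lra).
  pose proof (sin_cos_sq y) as Hy.
  assert (E1 : al * cos x - cos y = - lam * sin y).
  { transitivity (- lam * sin y + cos y * tangency al be x y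
                  + al * cos x * (1 - (sin y ^ 2 + cos y ^ 2)));
      [unfold lam, cross, tangency; ring|rewrite Ht, Hy; ring]. }
  assert (E2 : be * sin x - sin y = lam * cos y).
  { transitivity (lam * cos y + sin y * tangency al be x y
                  + be * sin x * (1 - (sin y ^ 2 + cos y ^ 2)));
      [unfold lam, cross, tangency; ring|rewrite Ht, Hy; ring]. }
  unfold sqdist.
  replace (al * a * cos x - a * cos y) with (a * (al * cos x - cos y)) by ring.
  replace (be * b * sin x - b * sin y) with (b * (be * sin x - sin y)) by ring.
  replace ((a * lam * quarter_norm (b / a) y) ^ 2)
    with (a ^ 2 * lam ^ 2 * quarter_norm (b / a) y ^ 2) by ring.
  rewrite E1, E2, Hq. field. lra.
Qed.

Lemma sqdist_mul_quarter_turn A B a b x y : 0 < a -> 0 < b -> 0 < A -> 0 < B ->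
  0 < A ^ 2 - a ^ 2 -> A ^ 2 - a ^ 2 = B ^ 2 - b ^ 2 ->
  tangency (A / a) (B / b) x y = 0 ->
  sqrt (sqdist A B a b x y) *
  sqrt (sqdist A B a b (quarter_turn (b / a) x) (quarter_turn (b / a) y)) = A ^ 2 - a ^ 2.
Proof.
  intros Ha Hb HA HB Hk Hab Ht.
  assert (Hal : 1 < A / a) by (apply ratio_gt1; lra).
  assert (Hbe : 1 < B / b) by (apply ratio_gt1; lra).
  assert (Hga : 0 < b / a) by (apply Rdiv_lt_0_compat; assumption).
  pose proof (confocal_ratios A B a b Ha Hb Hab) as Hconf.
  pose proof (tangency_quarter_turn _ _ _ Hal Hbe Hga Hconf x y Ht) as Ht'.
  rewrite <- sqrt_mult by apply sqdist_nonneg.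
  rewrite (sqdist_tangency A B a b x y), (sqdist_tangency A B a b _ _) by assumption.
  rewrite cross_quarter_turn, quarter_norm_quarter_turn by assumption.
  pose proof (quarter_norm_pos _ Hga x). pose proof (quarter_norm_pos _ Hga y).
  pose proof (cross_mul_swap _ _ _ Hal Hbe Hga Hconf x y Ht) as Hcross.
  set (lam := cross (A / a) (B / b) x y) in *.
  set (mu := cross (B / b) (A / a) x y) in *.
  set (Mx := quarter_norm (b / a) x) in *. set (My := quarter_norm (b / a) y) in *.
  replace ((a * lam * My) ^ 2 *
           (a * (b / a * mu / (Mx * My)) * (b / a / My)) ^ 2)
    with ((b ^ 2 * (lam * mu) / (Mx * My)) ^ 2) by (field; lra).
  rewrite Hcross.
  replace (b ^ 2 * (((B / b) ^ 2 - 1) * (Mx * My)) / (Mx * My)) with (B ^ 2 - b ^ 2)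
    by (field; lra).
  rewrite <- Hab. apply sqrt_pow2. lra.
Qed.

(** * Commuting increasing maps *)

Definition strict_mono (f : R -> R) : Prop := forall u v, u < v -> f u < f v.

Lemma iter_strict_mono (f : R -> R) n : strict_mono f -> strict_mono (Nat.iter n f).
Proof. intros Hf u v Huv. induction n as [|n IH]; simpl; auto. Qed.

Lemma iter_gt (f : R -> R) n x : (forall z, z < f z) -> (0 < n)%nat -> x < Nat.iter n f x.
Proof.
  intros Hf Hn. destruct n as [|n]; [lia|]. clear Hn. rewrite Nat.iter_succ.
  apply (Rle_lt_trans _ (Nat.iter n f x)); [|apply Hf].
  induction n as [|n IH]; simpl; [lra|]. specialize (Hf (Nat.iter n f x)). lra.
Qed.

Lemma iter_commute (f g : R -> R) n x : (forall z, f (g z) = g (f z)) ->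
  Nat.iter n f (g x) = g (Nat.iter n f x).
Proof. intro Hfg. symmetry. apply (Nat.iter_swap_gen _ _ g f f). intro. symmetry. apply Hfg. Qed.

Section CommutingMaps.

Variables f g : R -> R.
Hypotheses (Hf : strict_mono f) (Hg : strict_mono g) (Hfg : forall z, f (g z) = g (f z)).

Lemma iter_lt_of_lt x k : g x < f x -> Nat.iter (S k) g x < Nat.iter (S k) f x.
Proof.
  intro Hx. induction k as [|k IH]; [exact Hx|].
  rewrite (Nat.iter_succ (S k) _ g), (Nat.iter_succ_r (S k) _ f).
  apply (Rlt_trans _ (g (Nat.iter (S k) f x))); [apply Hg, IH|].
  rewrite <- iter_commute by assumption. apply iter_strict_mono; assumption.
Qed.

End CommutingMaps.

Lemma eq_of_iter_eq (f g : R -> R) n x : strict_mono f -> strict_mono g ->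
  (forall z, f (g z) = g (f z)) ->
  Nat.iter (S n) f x = Nat.iter (S n) g x -> f x = g x.
Proof.
  intros Hf Hg Hfg Hn.
  destruct (Rtotal_order (f x) (g x)) as [Hlt|[Heq|Hgt]]; [exfalso|assumption|exfalso].
  - pose proof (iter_lt_of_lt g f Hg Hf (fun z => eq_sym (Hfg z)) x n Hlt). lra.
  - pose proof (iter_lt_of_lt f g Hf Hg Hfg x n Hgt). lra.
Qed.

Lemma iter_iter (f : R -> R) k m x : Nat.iter k (Nat.iter m f) x = Nat.iter (k * m) f x.
Proof. induction k as [|k IH]; simpl; [reflexivity|]. rewrite Nat.iter_add. congruence. Qed.

(** * Eccentric-angle parametrization *)

Lemma cos_sin_surj u v : u ^ 2 + v ^ 2 = 1 -> exists t, cos t = u /\ sin t = v.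
Proof.
  intro Huv. assert (Hu : -1 <= u <= 1) by (split; nra).
  assert (Hs : sqrt (1 - u²) = Rabs v).
  { rewrite <- sqrt_Rsqr_abs. f_equal. unfold Rsqr. lra. }
  destruct (Rle_or_lt 0 v).
  - exists (acos u). rewrite cos_acos, sin_acos, Hs, Rabs_right by lra. lra.
  - exists (- acos u). rewrite cos_neg, sin_neg, cos_acos, sin_acos, Hs, Rabs_left by lra. lra.
Qed.

Lemma ellipse_pt_of_on_ellipse A B X : 0 < A -> 0 < B -> on_ellipse A B X ->
  exists t, X = ellipse_pt A B t.
Proof.
  intros HA HB HX. destruct X as [x y]. unfold on_ellipse in HX. simpl in HX.
  destruct (cos_sin_surj (x / A) (y / B)) as [t [Hc Hs]].
  { rewrite <- HX. field. lra. }
  exists t. unfold ellipse_pt. rewrite Hc, Hs. f_equal; field; lra.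
Qed.

Lemma tangency_of_on_tangent_at A B a b x t : 0 < a -> 0 < b ->
  on_tangent_at a b (ellipse_pt a b t) (ellipse_pt A B x) -> tangency (A / a) (B / b) x t = 0.
Proof.
  intros Ha Hb H. unfold on_tangent_at, ellipse_pt in H. simpl in H.
  unfold tangency. rewrite <- H. field. lra.
Qed.

Lemma det2_ellipse_pt A B x y :
  det2 (ellipse_pt A B x) (ellipse_pt A B y) = A * B * sin (y - x).
Proof. unfold det2, ellipse_pt. simpl. rewrite sin_minus. ring. Qed.

Lemma ellipse_pt_period_Z A B x k : ellipse_pt A B (x + 2 * IZR k * PI) = ellipse_pt A B x.
Proof. unfold ellipse_pt. rewrite cos_period_Z, sin_period_Z. reflexivity. Qed.

Lemma ellipse_pt_inj A B x y : 0 < A -> 0 < B ->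
  ellipse_pt A B x = ellipse_pt A B y -> cos x = cos y /\ sin x = sin y.
Proof.
  intros HA HB H. unfold ellipse_pt in H. injection H as Hc Hs.
  split; [apply (Rmult_eq_reg_l A) | apply (Rmult_eq_reg_l B)]; lra.
Qed.

Lemma ellipse_pt_tangency_root A B al be s t : 1 < al -> 1 < be ->
  tangency al be s t = 0 ->
  ellipse_pt A B t = ellipse_pt A B (next_root al be s) \/
  ellipse_pt A B t = ellipse_pt A B (prev_root al be s).
Proof.
  intros Hal Hbe Ht. destruct (tangency_roots al be Hal Hbe s t Ht) as [k [-> | ->]];
    [left|right]; apply ellipse_pt_period_Z.
Qed.

(** * The billiard orbit *)

Section Billiard.

Variables a_c b_c a_e b_e : R.
Hypotheses (hac : 0 < a_c) (hbc : 0 < b_c) (hae : 0 < a_e) (hbe : 0 < b_e)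
  (hconf : a_e ^ 2 - a_c ^ 2 = b_e ^ 2 - b_c ^ 2) (hke : 0 < a_e ^ 2 - a_c ^ 2).

Variables (N : nat) (P Q : nat -> point).
Hypotheses (hN : (0 < N)%nat) (hper : forall i, P (i + N)%nat = P i)
  (hmin : forall m, (0 < m < N)%nat -> exists i, P (i + m)%nat <> P i)
  (hPe : forall i, on_ellipse a_e b_e (P i))
  (hQc : forall i, on_ellipse a_c b_c (Q i))
  (htan1 : forall i, on_tangent_at a_c b_c (Q i) (P i))
  (htan2 : forall i, on_tangent_at a_c b_c (Q i) (P (S i)))
  (hccw : forall i, 0 < det2 (P i) (P (S i))).

Local Notation al := (a_e / a_c).
Local Notation be := (b_e / b_c).
Local Notation ga := (b_c / a_c).
Local Notation next := (next_root al be).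

Let Hal : 1 < al. Proof. apply ratio_gt1; [assumption..|lra]. Qed.
Let Hbe : 1 < be. Proof. apply ratio_gt1; [assumption..|lra]. Qed.
Let Hga : 0 < ga. Proof. apply Rdiv_lt_0_compat; assumption. Qed.
Let Hconf : ga ^ 2 * (be ^ 2 - 1) = al ^ 2 - 1.
Proof. apply confocal_ratios; assumption. Qed.

Lemma P_succ_neq i : P (S i) <> P i.
Proof.
  intro Heq. pose proof (hccw i) as Hc. rewrite Heq in Hc. unfold det2 in Hc. lra.
Qed.

Lemma contact_cases i th : P i = ellipse_pt a_e b_e th ->
  Q i = ellipse_pt a_c b_c (next th) \/ Q i = ellipse_pt a_c b_c (prev_root al be th).
Proof.
  intro HP. destruct (ellipse_pt_of_on_ellipse _ _ _ hac hbc (hQc i)) as [t Ht].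
  rewrite Ht. apply ellipse_pt_tangency_root; [assumption..|].
  apply tangency_of_on_tangent_at; [assumption..|]. rewrite <- Ht, <- HP. apply htan1.
Qed.

Lemma vertex_cases i t : Q i = ellipse_pt a_c b_c t ->
  P (S i) = ellipse_pt a_e b_e (next t) \/ P (S i) = ellipse_pt a_e b_e (prev_root al be t).
Proof.
  intro HQ. destruct (ellipse_pt_of_on_ellipse _ _ _ hae hbe (hPe (S i))) as [th Hth].
  rewrite Hth. apply ellipse_pt_tangency_root; [assumption..|].
  rewrite tangency_sym. apply tangency_of_on_tangent_at; [assumption..|].
  rewrite <- Hth, <- HQ. apply htan2.
Qed.

(* Of the four combinations of [contact_cases] and [vertex_cases], two return to [P i]
   and one runs clockwise. *)
Lemma billiard_step i th : P i = ellipse_pt a_e b_e th ->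
  Q i = ellipse_pt a_c b_c (next th) /\ P (S i) = ellipse_pt a_e b_e (next (next th)).
Proof.
  intro HP. pose proof (P_succ_neq i) as Hneq.
  destruct (contact_cases i th HP) as [HQ|HQ];
    destruct (vertex_cases i _ HQ) as [HP'|HP']; [tauto|exfalso..].
  - rewrite prev_next_root, <- HP in HP' by assumption. contradiction.
  - rewrite next_prev_root, <- HP in HP' by assumption. contradiction.
  - pose proof (hccw i) as Hc.
    rewrite HP, HP', det2_ellipse_pt in Hc.
    set (t0 := prev_root al be th) in *.
    replace th with (next t0) in Hc by (apply next_prev_root; assumption).
    pose proof (next_prev_gap al be Hal Hbe t0) as Hgap.
    assert (0 < sin (next t0 - prev_root al be t0)) by (apply sin_gt_0; lra).
    rewrite <- Ropp_minus_distr, sin_neg in Hc.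
    assert (0 < a_e * b_e) by nra. nra.
Qed.

Variable phi0 : R.
Hypothesis hP0 : P 0%nat = ellipse_pt a_e b_e phi0.

Definition param (j : nat) : R := Nat.iter j next phi0.

Lemma param_add j m : param (j + m) = Nat.iter m next (param j).
Proof. unfold param. rewrite Nat.add_comm, Nat.iter_add. reflexivity. Qed.

Lemma tangency_param j : tangency al be (param j) (param (S j)) = 0.
Proof. apply tangency_next_root; assumption. Qed.

Lemma P_param i : P i = ellipse_pt a_e b_e (param (2 * i)).
Proof.
  induction i as [|i IH]; [exact hP0|].
  replace (2 * S i)%nat with (S (S (2 * i))) by ring.
  apply (billiard_step i _ IH).
Qed.

Lemma Q_param i : Q i = ellipse_pt a_c b_c (param (2 * i + 1)).
Proof.
  rewrite Nat.add_1_r. apply (billiard_step i _ (P_param i)).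
Qed.

Lemma rotation_number : exists rho : nat,
  forall j, param (j + 2 * N) = param j + INR (2 * rho) * PI.
Proof.
  pose proof (hper 0%nat) as H0. rewrite Nat.add_0_l, !P_param in H0.
  change (2 * 0)%nat with 0%nat in H0.
  destruct (ellipse_pt_inj _ _ _ _ hae hbe H0) as [Hc Hs].
  destruct (cos_sin_eq_shift _ _ Hc Hs) as [k Hk].
  assert (Hlt : param 0 < param (2 * N))
    by (apply iter_gt; [apply next_root_bounds; assumption|lia]).
  assert (Hk0 : (0 <= k)%Z).
  { apply le_IZR. pose proof PI_RGT_0. destruct (Rle_or_lt 0 (IZR k)); [assumption|nra]. }
  destruct (Z_of_nat_complete k Hk0) as [rho ->].
  exists rho. intro j. rewrite Nat.add_comm, param_add.
  replace (param (2 * N)) with (param 0 + INR (2 * rho) * PI)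
    by (rewrite Hk, mult_INR, <- INR_IZR_INZ; change (INR 2) with 2; ring).
  apply (iter_commute _ (fun z => z + INR (2 * rho) * PI)).
  intro z. apply commute_add_PI. intro w. apply next_root_add_PI.
Qed.

Lemma half_period_iter m rho : N = (2 * m)%nat ->
  (forall j, param (j + 2 * N) = param j + INR (2 * rho) * PI) ->
  forall j, param (j + m) = Nat.iter rho (quarter_turn ga) (param j).
Proof.
  intros Hm Hrho j. rewrite param_add.
  apply (eq_of_iter_eq _ _ 3); try apply iter_strict_mono.
  - intros u v. apply next_root_mono; assumption.
  - intros u v. apply quarter_turn_mono; assumption.
  - intro z. rewrite iter_commute; [reflexivity|].
    intro w. symmetry. rewrite iter_commute; [reflexivity|].
    intro v. symmetry. apply next_root_quarter_turn; assumption.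
  - rewrite !iter_iter, <- param_add.
    replace (j + 4 * m)%nat with (j + 2 * N)%nat by lia.
    replace (4 * rho)%nat with (2 * (2 * rho))%nat by ring.
    rewrite Hrho, iter_quarter_turn_even by assumption. reflexivity.
Qed.

Lemma half_period_quarter_turn m : N = (2 * m)%nat ->
  exists q : nat, forall j, param (j + m) = quarter_turn ga (param j) + INR q * PI.
Proof.
  intro Hm. destruct rotation_number as [rho Hrho].
  pose proof (half_period_iter m rho Hm Hrho) as Hjm.
  destruct (Nat.Even_or_Odd rho) as [[q ->]|[q ->]].
  - exfalso. destruct (hmin m ltac:(lia)) as [i Hi]. apply Hi.
    rewrite !P_param. replace (2 * (i + m))%nat with (2 * i + m + m)%nat by ring.
    rewrite !Hjm, !iter_quarter_turn_even by assumption.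
    replace (param (2 * i) + INR q * PI + INR q * PI)
      with (param (2 * i) + 2 * IZR (Z.of_nat q) * PI) by (rewrite <- INR_IZR_INZ; ring).
    apply ellipse_pt_period_Z.
  - exists q. intro j. rewrite Hjm, Nat.add_1_r, Nat.iter_succ_r.
    apply iter_quarter_turn_even. assumption.
Qed.

Definition seg (j : nat) : R := sqrt (sqdist a_e b_e a_c b_c (param j) (param (S j))).

Lemma seg_mul_half_period m : N = (2 * m)%nat ->
  forall j, seg j * seg (j + m) = a_e ^ 2 - a_c ^ 2.
Proof.
  intro Hm. destruct (half_period_quarter_turn m Hm) as [q Hq]. intro j.
  unfold seg. rewrite <- Nat.add_succ_l, !Hq, sqdist_add_PI.
  apply sqdist_mul_quarter_turn; try assumption. apply tangency_param.
Qed.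

Lemma edist_P_Q i : edist (P i) (Q i) = seg (2 * i).
Proof. rewrite P_param, Q_param, Nat.add_1_r. reflexivity. Qed.

Lemma edist_Q_P i : edist (Q i) (P (S i)) = seg (2 * i + 1).
Proof.
  rewrite Q_param, P_param, edist_sym, edist_ellipse_pt, sqdist_swap by assumption.
  unfold seg. replace (S (2 * i + 1)) with (2 * S i)%nat by ring. reflexivity.
Qed.

End Billiard.

Theorem theorem5
  (a_c b_c a_e b_e k_e : R)
  (hac : 0 < a_c) (hbc : 0 < b_c) (hae : 0 < a_e) (hbe : 0 < b_e)
  (hkea : k_e = a_e ^ 2 - a_c ^ 2) (hkeb : k_e = b_e ^ 2 - b_c ^ 2)
  (hke : 0 < k_e)
  (N : nat) (P Q : nat -> point)
  (hN : (0 < N)%nat)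
  (hper : forall i, P (i + N)%nat = P i)
  (hmin : forall m, (0 < m < N)%nat -> exists i, P (i + m)%nat <> P i)
  (hPe : forall i, on_ellipse a_e b_e (P i))
  (hQc : forall i, on_ellipse a_c b_c (Q i))
  (htan1 : forall i, on_tangent_at a_c b_c (Q i) (P i))
  (htan2 : forall i, on_tangent_at a_c b_c (Q i) (P (S i)))
  (htwo : forall i, Q i <> Q (S i))
  (hccw : forall i, 0 < det2 (P i) (P (S i)))
  (heven : Nat.Even N) :
  let r := fun i => edist (Q (Nat.pred i)) (P i) in
  let l := fun i => edist (P i) (Q i) in
  (forall n, N = (4 * n)%nat ->
     forall i, (1 <= i)%nat ->
       r i * r (i + n)%nat = k_e /\ l i * l (i + n)%nat = k_e) /\
  (forall n, N = (4 * n + 2)%nat ->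
     forall i, (1 <= i)%nat ->
       r i * l (i + n)%nat = k_e /\ l i * r (i + n + 1)%nat = k_e).
Proof.
  intros r l.
  assert (hconf : a_e ^ 2 - a_c ^ 2 = b_e ^ 2 - b_c ^ 2) by congruence.
  subst k_e.
  destruct (ellipse_pt_of_on_ellipse _ _ _ hae hbe (hPe 0%nat)) as [phi0 hP0].
  set (s := seg a_c b_c a_e b_e phi0).
  assert (Hl : forall i, l i = s (2 * i)%nat) by (intro; eapply edist_P_Q; eassumption).
  assert (Hr : forall i, r (S i) = s (2 * i + 1)%nat)
    by (intro; eapply edist_Q_P; eassumption).
  assert (Hhalf : forall m, N = (2 * m)%nat -> forall j, s j * s (j + m)%nat = a_e ^ 2 - a_c ^ 2)
    by (intro; eapply seg_mul_half_period; eassumption).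
  split; intros n Hn [|i] Hi; try lia.
  - replace (S i + n)%nat with (S (i + n)) by lia. rewrite !Hr, !Hl.
    replace (2 * (i + n) + 1)%nat with (2 * i + 1 + 2 * n)%nat by lia.
    replace (2 * S (i + n))%nat with (2 * S i + 2 * n)%nat by lia.
    split; apply Hhalf; lia.
  - replace (S i + n + 1)%nat with (S (S i + n)) by lia. rewrite !Hr, !Hl.
    replace (2 * (S i + n) + 1)%nat with (2 * S i + (2 * n + 1))%nat by lia.
    replace (2 * (S i + n))%nat with (2 * i + 1 + (2 * n + 1))%nat by lia.
    split; apply Hhalf; lia.
Qed.
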